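(* Let $\alpha\in(0,1)$, $a,b\in\mathbb{R}$, $\tau>0$, and $Q(s)=s^\alpha-a-b e^{-s\tau}$ (principal branch of $s^\alpha$, defined for $s\in\mathbb{C}\setminus(-\infty,0]$). For any real numbers $\rho_1\le\rho_2$, the equation $Q(s)=0$ has at most finitely many roots in the vertical strip $\{z\in\mathbb{C}:\rho_1\le \operatorname{Re}z\le\rho_2\}$.
   Context: $s^\alpha=|s|^\alpha e^{i\alpha\arg s}$ with $\arg s\in(-\pi,\pi)$. *)

From Stdlib Require Import Reals List.
Open Scope R_scope.

Definition Cplx := (R * R)%type.
Definition Re (z : Cplx) : R := fst z.
Definition Im (z : Cplx) : R := snd z.

Definition Cmod (z : Cplx) : R := sqrt (Re z ^ 2 + Im z ^ 2).

Definition in_slit_plane (z : Cplx) : Prop := ~ (Im z = 0 /\ Re z <= 0).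

(* Principal argument (atan2), with values in (-pi, pi) on the slit plane. *)
Definition Carg (z : Cplx) : R :=
  let x := Re z in let y := Im z in
  if Rlt_dec 0 x then atan (y / x)
  else if Rlt_dec 0 y then PI / 2 - atan (x / y)
  else if Rlt_dec y 0 then - (PI / 2) - atan (x / y)
  else PI.

(* Principal power  s^alpha = |s|^alpha e^{i alpha arg s}  (s in slit plane). *)
Definition Cpow_principal (s : Cplx) (alpha : R) : Cplx :=
  (Rpower (Cmod s) alpha * cos (alpha * Carg s),
   Rpower (Cmod s) alpha * sin (alpha * Carg s)).

Definition Cexp (z : Cplx) : Cplx := (exp (Re z) * cos (Im z), exp (Re z) * sin (Im z)).

Definition Cadd (z w : Cplx) : Cplx := (Re z + Re w, Im z + Im w).
Definition Cscal (r : R) (z : Cplx) : Cplx := (r * Re z, r * Im z).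
Definition RtoC (r : R) : Cplx := (r, 0).

Definition Q (alpha a b tau : R) (s : Cplx) : Cplx :=
  Cadd (Cpow_principal s alpha)
       (Cadd (RtoC (- a)) (Cscal (- b) (Cexp (Cscal (- tau) s)))).

Definition C0 : Cplx := (0, 0).

(* The zeros of [Q] with [rho1 <= Re s] satisfy [|s|^al <= |a| + |b| e^(-tau rho1)], so those in the
   strip lie in a compact rectangle, and by bisection it suffices that every point of the plane has a
   neighbourhood containing only finitely many zeros.
   Off the cut, [Q] is holomorphic and its derivatives satisfy, for [j >= 1],
     tau Q^(j) + Q^(j+1) = al (al - 1) ... (al - j + 1) s^(al - j - 1) (tau s + al - j),
   so the first three derivatives never vanish together, and a Taylor estimate isolates every zero.
   Near a point of the negative axis, [Im Q] is dominated by [Im s^al], which stays away from 0.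
   Near 0, [s^al] tends to 0 while [a + b e^(-tau s)] tends to [a + b]; when [a + b = 0], the term
   [|s|^al] still dominates [b (e^(-tau s) - 1) = O(|s|)] because [al < 1]. *)

From Stdlib Require Import Reals Lra Psatz List Factorial Wf_nat Classical ClassicalEpsilon.
From Coquelicot Require Import Coquelicot.
From Pilot Require Import Defs.
Open Scope R_scope.

(* [Defs.Cmod] and Coquelicot's modulus are the same function; we work with the latter. *)
Notation cmod := Coquelicot.Complex.Cmod.

(* [ring] on [C], for equalities stated at the convertible type [Cplx]. *)
Ltac C_ring := match goal with |- ?L = ?R => change (@eq C L R) end; ring.

(** * Modulus and principal argument *)

Lemma slit_plane_neq0 (z : C) : in_slit_plane z -> z <> 0%C.
Proof. intros Hs ->. apply Hs. unfold Re, Im; simpl; lra. Qed.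

Lemma slit_plane_Cmod_pos z : in_slit_plane z -> 0 < cmod z.
Proof. intros Hs. apply Cmod_gt_0, slit_plane_neq0, Hs. Qed.

Lemma Cmod_sqr z : cmod z * cmod z = fst z ^ 2 + snd z ^ 2.
Proof. apply sqrt_sqrt. nra. Qed.

Lemma Rabs_fst_le_Cmod z : Rabs (fst z) <= cmod z.
Proof. pose proof (Rmax_Cmod z). pose proof (Rmax_l (Rabs (fst z)) (Rabs (snd z))). lra. Qed.

Lemma Rabs_snd_le_Cmod z : Rabs (snd z) <= cmod z.
Proof. pose proof (Rmax_Cmod z). pose proof (Rmax_r (Rabs (fst z)) (Rabs (snd z))). lra. Qed.

Lemma Cmod_le_Rabs_fst_snd z : cmod z <= Rabs (fst z) + Rabs (snd z).
Proof.
  pose proof (Rabs_pos (fst z)). pose proof (Rabs_pos (snd z)).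
  unfold Complex.Cmod. rewrite <- (sqrt_pow2 (Rabs (fst z) + Rabs (snd z))) by lra.
  apply sqrt_le_1_alt. rewrite <- (pow2_abs (fst z)), <- (pow2_abs (snd z)). nra.
Qed.

Lemma Cmod_swap x y : cmod (x, y) = cmod (y, x).
Proof. unfold Complex.Cmod; simpl. f_equal. ring. Qed.

Lemma Carg_right x y : 0 < x -> Carg (x, y) = atan (y / x).
Proof. intros H. unfold Carg, Re, Im; simpl. destruct (Rlt_dec 0 x); lra. Qed.

Lemma Carg_upper x y : 0 < y -> Carg (x, y) = PI / 2 - atan (x / y).
Proof.
  intros H. unfold Carg, Re, Im; simpl. destruct (Rlt_dec 0 x).
  - replace (y / x) with (/ (x / y)) by (field; lra).
    apply atan_inv, Rdiv_lt_0_compat; lra.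
  - destruct (Rlt_dec 0 y); lra.
Qed.

Lemma Carg_lower x y : y < 0 -> Carg (x, y) = - (PI / 2) - atan (x / y).
Proof.
  intros H. unfold Carg, Re, Im; simpl. destruct (Rlt_dec 0 x).
  - replace (y / x) with (- / (x / - y)) by (field; lra).
    replace (x / y) with (- (x / - y)) by (field; lra).
    rewrite !atan_opp, atan_inv by (apply Rdiv_lt_0_compat; lra). ring.
  - destruct (Rlt_dec 0 y); [lra|]. destruct (Rlt_dec y 0); lra.
Qed.

Lemma cos_sin_atan_div u v : 0 < v ->
  cos (atan (u / v)) = v / cmod (v, u) /\ sin (atan (u / v)) = u / cmod (v, u).
Proof.
  intros Hv. pose proof (Cmod_sqr (v, u)) as Hm. simpl in Hm.
  assert (Hm0 : 0 < cmod (v, u)) by (apply Cmod_gt_0; intros [= ]; lra).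
  assert (E : sqrt (1 + (u / v)²) = cmod (v, u) / v).
  { rewrite <- (sqrt_Rsqr (cmod (v, u) / v)) by (apply Rlt_le, Rdiv_lt_0_compat; lra).
    f_equal. unfold Rsqr. field_simplify_eq; [|lra]. nra. }
  rewrite cos_atan, sin_atan, E. split; field; lra.
Qed.

Lemma cos_sin_Carg z : in_slit_plane z ->
  cos (Carg z) = fst z / cmod z /\ sin (Carg z) = snd z / cmod z.
Proof.
  unfold in_slit_plane, Re, Im. destruct z as [x y]; simpl. intros Hs.
  destruct (Rlt_dec 0 x) as [Hx|Hx]; [|destruct (Rlt_dec 0 y) as [Hy|Hy]].
  - rewrite Carg_right by exact Hx. apply cos_sin_atan_div, Hx.
  - rewrite Carg_upper, cos_minus, sin_minus, cos_PI2, sin_PI2, Cmod_swap by exact Hy.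
    destruct (cos_sin_atan_div x y Hy) as [-> ->]. split; ring.
  - assert (Hy' : 0 < - y) by (destruct (Req_dec y 0); [exfalso; apply Hs|]; lra).
    rewrite Carg_lower by lra. replace (x / y) with (- (x / - y)) by (field; lra).
    rewrite atan_opp, cos_minus, sin_minus, cos_neg, sin_neg, cos_PI2, sin_PI2 by lra.
    rewrite cos_neg, sin_neg, Cmod_swap.
    replace (cmod (y, x)) with (cmod (- y, x)) by (unfold Complex.Cmod; simpl; f_equal; ring).
    destruct (cos_sin_atan_div x (- y) Hy') as [-> ->].
    split; field; apply Rgt_not_eq, Cmod_gt_0; intros [= ]; lra.
Qed.

Lemma slit_plane_norm2_pos z : in_slit_plane z -> 0 < fst z ^ 2 + snd z ^ 2.
Proof. intros Hs. rewrite <- Cmod_sqr. pose proof (slit_plane_Cmod_pos z Hs). nra. Qed.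

Lemma exp_le x y : x <= y -> exp x <= exp y.
Proof. intros [H|H]; [apply Rlt_le, exp_increasing, H|rewrite H; apply Rle_refl]. Qed.

(** * Derivatives along segments *)

Definition line (p h : C) (t : R) : C := (fst p + t * fst h, snd p + t * snd h).

Lemma locally_pos_affine c d t0 : 0 < c + t0 * d -> locally t0 (fun t => 0 < c + t * d).
Proof.
  intros H. assert (Hc : continuity_pt (fun t => c + t * d) t0) by reg.
  apply (filter_imp (fun t => Rabs (c + t * d - (c + t0 * d)) < mkposreal _ H)).
  - simpl. intros t Ht. apply Rabs_def2 in Ht. lra.
  - exact (proj1 (continuity_pt_locally _ _) Hc (mkposreal _ H)).
Qed.

Lemma is_derive_Carg_line p h t0 : in_slit_plane (line p h t0) ->
  is_derive (fun t => Carg (line p h t)) t0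
    ((fst (line p h t0) * snd h - snd (line p h t0) * fst h) /
     (fst (line p h t0) ^ 2 + snd (line p h t0) ^ 2)).
Proof.
  intros Hs. pose proof (slit_plane_norm2_pos _ Hs) as Hq.
  unfold in_slit_plane, line, Re, Im in *; simpl in *.
  destruct (Rlt_dec 0 (fst p + t0 * fst h)) as [Hx|Hx];
    [|destruct (Rlt_dec 0 (snd p + t0 * snd h)) as [Hy|Hy]].
  - apply is_derive_ext_loc with (fun t => atan ((snd p + t * snd h) / (fst p + t * fst h))).
    { apply (filter_imp _ _ (fun t Ht => eq_sym (Carg_right _ _ Ht)) (locally_pos_affine _ _ _ Hx)). }
    auto_derive; [lra|]. field. split; intros ?; lra.
  - apply is_derive_ext_loc with (fun t => PI / 2 - atan ((fst p + t * fst h) / (snd p + t * snd h))).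
    { apply (filter_imp _ _ (fun t Ht => eq_sym (Carg_upper _ _ Ht)) (locally_pos_affine _ _ _ Hy)). }
    auto_derive; [lra|]. field. split; intros ?; lra.
  - assert (Hy' : 0 < - snd p + t0 * - snd h).
    { destruct (Req_dec (snd p + t0 * snd h) 0); [exfalso; apply Hs|]; lra. }
    apply is_derive_ext_loc with (fun t => - (PI / 2) - atan ((fst p + t * fst h) / (snd p + t * snd h))).
    { apply (filter_imp (fun t => 0 < - snd p + t * - snd h)); [|exact (locally_pos_affine _ _ _ Hy')].
      intros t Ht. symmetry. apply Carg_lower. lra. }
    auto_derive; [lra|]. field. split; intros ?; lra.
Qed.

Definition is_cderive (f : R -> C) (t : R) (l : C) :=
  is_derive (fun u => fst (f u)) t (fst l) /\ is_derive (fun u => snd (f u)) t (snd l).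

Lemma is_cderive_ext f g t l l' :
  (forall u, f u = g u) -> l = l' -> is_cderive f t l -> is_cderive g t l'.
Proof.
  intros Hfg <- [H1 H2]. split; eapply is_derive_ext; eauto; intros u; simpl; rewrite Hfg; reflexivity.
Qed.

Lemma is_cderive_const (c : C) t : is_cderive (fun _ => c) t 0.
Proof. split; apply (is_derive_const (V := R_NormedModule)). Qed.

Lemma is_cderive_plus f g t l m :
  is_cderive f t l -> is_cderive g t m -> is_cderive (fun u => f u + g u)%C t (l + m)%C.
Proof.
  intros [H1 H2] [H3 H4]. split; simpl; apply (is_derive_plus (V := R_NormedModule)); assumption.
Qed.

Lemma is_cderive_scal (c : C) f t l :
  is_cderive f t l -> is_cderive (fun u => c * f u)%C t (c * l)%C.
Proof.
  intros [H1 H2]. split; simpl.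
  - apply (is_derive_minus (V := R_NormedModule)); apply is_derive_scal; assumption.
  - apply (is_derive_plus (V := R_NormedModule)); apply is_derive_scal; assumption.
Qed.

Lemma is_cderive_opp f t l : is_cderive f t l -> is_cderive (fun u => - f u)%C t (- l)%C.
Proof. intros [H1 H2]. split; simpl; apply (is_derive_opp (V := R_NormedModule)); assumption. Qed.

Lemma is_derive_Cmod_line p h t0 : in_slit_plane (line p h t0) ->
  is_derive (fun t => cmod (line p h t)) t0
    ((fst (line p h t0) * fst h + snd (line p h t0) * snd h) / cmod (line p h t0)).
Proof.
  intros Hs. pose proof (slit_plane_norm2_pos _ Hs) as Hq. pose proof (slit_plane_Cmod_pos _ Hs) as Hr.
  unfold Complex.Cmod, line in *; simpl in *. auto_derive; [lra|]. field. lra.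
Qed.

Lemma is_derive_eq (f : R -> R) x l l' : is_derive f x l -> l = l' -> is_derive f x l'.
Proof. now intros H <-. Qed.

Lemma is_derive_Rpower_Cmod_line be p h t0 : in_slit_plane (line p h t0) ->
  is_derive (fun t => Rpower (cmod (line p h t)) be) t0
    (be * Rpower (cmod (line p h t0)) be *
     ((fst (line p h t0) * fst h + snd (line p h t0) * snd h) / (cmod (line p h t0) ^ 2))).
Proof.
  intros Hs. pose proof (slit_plane_Cmod_pos _ Hs) as Hr.
  eapply is_derive_eq.
  - apply (is_derive_comp (fun u => Rpower u be) (fun t => cmod (line p h t))).
    + apply is_derive_Reals, derivable_pt_lim_power, Hr.
    + apply is_derive_Cmod_line, Hs.
  - unfold scal; simpl; unfold mult; simpl. unfold Rminus.
    rewrite Rpower_plus, Rpower_Ropp, Rpower_1 by exact Hr. field. lra.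
Qed.

Lemma is_cderive_Cpow_principal_line be p h t0 : in_slit_plane (line p h t0) ->
  is_cderive (fun t => Cpow_principal (line p h t) be) t0
    (be * Cpow_principal (line p h t0) (be - 1) * h)%C.
Proof.
  intros Hs. pose proof (slit_plane_Cmod_pos _ Hs) as Hr. pose proof (Cmod_sqr (line p h t0)) as Hr2.
  pose proof (is_derive_Rpower_Cmod_line be p h t0 Hs) as HR.
  pose proof (is_derive_Carg_line p h t0 Hs) as HT.
  destruct (cos_sin_Carg _ Hs) as [Hc Hsn].
  unfold Cpow_principal. change Defs.Cmod with Complex.Cmod.
  set (x := fst (line p h t0)) in *. set (y := snd (line p h t0)) in *.
  set (r := cmod (line p h t0)) in *. set (th := Carg (line p h t0)) in *.
  assert (Hm : Rpower r (be - 1) = Rpower r be / r).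
  { unfold Rminus. rewrite Rpower_plus, Rpower_Ropp, Rpower_1 by exact Hr. field. lra. }
  assert (Hcos : cos ((be - 1) * th) = cos (be * th) * (x / r) + sin (be * th) * (y / r)).
  { replace ((be - 1) * th) with (be * th - th) by ring. rewrite cos_minus, <- Hc, <- Hsn. ring. }
  assert (Hsin : sin ((be - 1) * th) = sin (be * th) * (x / r) - cos (be * th) * (y / r)).
  { replace ((be - 1) * th) with (be * th - th) by ring. rewrite sin_minus, <- Hc, <- Hsn. ring. }
  split; simpl; eapply is_derive_eq.
  - apply (is_derive_mult (fun t => Rpower (cmod (line p h t)) be) (fun t => cos (be * Carg (line p h t))));
      [exact HR | apply (is_derive_comp cos), (is_derive_scal (fun t => Carg (line p h t))), HT |].
    + apply is_derive_cos.
    + intros; apply Rmult_comm.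
  - unfold plus, scal, mult; simpl; unfold mult; simpl. fold x y r th.
    rewrite Hm, Hcos, Hsin. replace (x * (x * 1) + y * (y * 1)) with (r * r) by (rewrite Hr2; ring).
    field. lra.
  - apply (is_derive_mult (fun t => Rpower (cmod (line p h t)) be) (fun t => sin (be * Carg (line p h t))));
      [exact HR | apply (is_derive_comp sin), (is_derive_scal (fun t => Carg (line p h t))), HT |].
    + apply is_derive_sin.
    + intros; apply Rmult_comm.
  - unfold plus, scal, mult; simpl; unfold mult; simpl. fold x y r th.
    rewrite Hm, Hcos, Hsin. replace (x * (x * 1) + y * (y * 1)) with (r * r) by (rewrite Hr2; ring).
    field. lra.
Qed.

Definition edelay (tau : R) (z : C) : C := Cexp (Cscal (- tau) z).

Lemma Cmod_polar r t : 0 <= r -> cmod (r * cos t, r * sin t) = r.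
Proof.
  intros Hr. unfold Complex.Cmod; cbn [fst snd].
  replace ((r * cos t) ^ 2 + (r * sin t) ^ 2) with (r ^ 2); [apply sqrt_pow2, Hr|].
  pose proof (sin2_cos2 t) as H. unfold Rsqr in H.
  replace ((r * cos t) ^ 2 + (r * sin t) ^ 2) with (r ^ 2 * (sin t * sin t + cos t * cos t)) by ring.
  rewrite H. ring.
Qed.

Lemma Cmod_Cpow_principal z be : cmod (Cpow_principal z be) = Rpower (cmod z) be.
Proof. apply Cmod_polar. left; apply exp_pos. Qed.

Lemma Cmod_edelay tau z : cmod (edelay tau z) = exp (- tau * fst z).
Proof. apply Cmod_polar. left; apply exp_pos. Qed.

Lemma Cpow_principal_neq0 (z : C) be : in_slit_plane z -> (Cpow_principal z be : C) <> 0%C.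
Proof.
  intros Hs H. pose proof (Cmod_Cpow_principal z be) as Hm. rewrite H, Cmod_0 in Hm.
  pose proof (exp_pos (be * ln (cmod z))). unfold Rpower in Hm. lra.
Qed.

Lemma Cpow_principal_plus1 (z : C) be : in_slit_plane z ->
  Cpow_principal z (be + 1) = (Cpow_principal z be * z)%C.
Proof.
  intros Hs. pose proof (slit_plane_Cmod_pos z Hs) as Hr. destruct (cos_sin_Carg z Hs) as [Hc Hsn].
  unfold Cpow_principal. change Defs.Cmod with Complex.Cmod.
  rewrite Rpower_plus, Rpower_1 by exact Hr.
  replace ((be + 1) * Carg z) with (be * Carg z + Carg z) by ring.
  rewrite cos_plus, sin_plus, Hc, Hsn. unfold Cmult; simpl. f_equal; field; lra.
Qed.

Lemma is_cderive_edelay_line tau p h t0 :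
  is_cderive (fun t => edelay tau (line p h t)) t0 (- tau * edelay tau (line p h t0) * h)%C.
Proof.
  unfold edelay, Cexp, Cscal, line, Re, Im. split; simpl; auto_derive; auto; ring.
Qed.

(** * A Taylor estimate and isolated zeros *)

(* The factor [2] comes from applying the mean value theorem to each coordinate. *)
Lemma Cmod_increment_le (g g' : R -> C) M :
  (forall t, 0 <= t <= 1 -> is_cderive g t (g' t)) ->
  (forall t, 0 <= t <= 1 -> cmod (g' t) <= M) ->
  cmod (g 1 - g 0)%C <= 2 * M.
Proof.
  intros Hd Hb.
  assert (Hmin : Rmin 0 1 = 0) by (apply Rmin_left; lra).
  assert (Hmax : Rmax 0 1 = 1) by (apply Rmax_right; lra).
  destruct (MVT_abs (fun t => fst (g t)) (fun t => fst (g' t)) 0 1) as [c1 [E1 I1]].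
  { intros c Hc. rewrite Hmin, Hmax in Hc. apply is_derive_Reals, (Hd c Hc). }
  destruct (MVT_abs (fun t => snd (g t)) (fun t => snd (g' t)) 0 1) as [c2 [E2 I2]].
  { intros c Hc. rewrite Hmin, Hmax in Hc. apply is_derive_Reals, (Hd c Hc). }
  rewrite Hmin, Hmax in I1, I2. rewrite Rminus_0_r, Rabs_R1, Rmult_1_r in E1, E2.
  pose proof (Cmod_le_Rabs_fst_snd (g 1 - g 0)%C) as Hl. simpl in Hl.
  pose proof (Rabs_fst_le_Cmod (g' c1)). pose proof (Rabs_snd_le_Cmod (g' c2)).
  pose proof (Hb c1 I1). pose proof (Hb c2 I2). unfold Rminus in E1, E2. lra.
Qed.

Lemma line_0 p h : line p h 0 = p.
Proof. destruct p; unfold line; simpl; f_equal; ring. Qed.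

Lemma line_1 p z : line p (z - p)%C 1 = z.
Proof. destruct p, z; unfold line; simpl; f_equal; ring. Qed.

Lemma line_scal p h (u : R) : line p (u * h)%C 1 = line p h u.
Proof. unfold line; simpl; f_equal; ring. Qed.

Lemma Cmod_line_sub p h u : cmod (line p h u - p)%C = Rabs u * cmod h.
Proof.
  replace (line p h u - p)%C with (u * h)%C by (apply injective_projections; simpl; ring).
  rewrite Cmod_mult, Cmod_R. reflexivity.
Qed.

Lemma Cmod_segment_lt p h d u : cmod h < d -> 0 <= u <= 1 -> cmod (line p h u - p)%C < d.
Proof.
  intros Hh Hu. rewrite Cmod_line_sub, Rabs_pos_eq by lra. pose proof (Cmod_ge_0 h). nra.
Qed.

Lemma remainder_scal (A c h : C) (u : R) k :
  (A * h - c * h ^ S k * (u ^ k / INR (fact k))%R = (A - c * (u * h) ^ k * (/ INR (fact k))%R) * h)%C.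
Proof. rewrite Cpow_mult_l, <- RtoC_pow. simpl Cpow. unfold Rdiv. rewrite RtoC_mult. C_ring. Qed.

Lemma is_cderive_monomial k (W : C) u :
  is_cderive (fun v => W * (v ^ S k / INR (fact (S k)))%R)%C u (W * (u ^ k / INR (fact k))%R)%C.
Proof.
  apply is_cderive_scal. unfold is_cderive, Complex.RtoC; cbn [fst snd].
  split; [|apply (is_derive_const (V := R_NormedModule))].
  assert (Hk : INR (fact (S k)) = INR (S k) * INR (fact k)) by (rewrite <- mult_INR; reflexivity).
  pose proof (INR_fact_neq_0 k). pose proof (INR_fact_neq_0 (S k)).
  assert (HS : INR (S k) <> 0) by (apply not_0_INR; lia).
  auto_derive; [auto|]. change (fact k + k * fact k)%nat with (fact (S k)).
  rewrite Hk. replace (match k with 0%nat => 1 | S _ => INR k + 1 end) with (INR (S k)) by reflexivity.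
  field. auto.
Qed.

(* [G (S j)] is the complex derivative of [G j] on the disc of radius [d] around [p],
   in the sense of derivatives along every segment issued from [p]. *)
Definition derivative_chain (G : nat -> C -> C) (p : C) (d : R) :=
  forall j h u, cmod (line p h u - p)%C < d ->
    is_cderive (fun v => G j (line p h v)) u (G (S j) (line p h u) * h)%C.

Lemma taylor_remainder_le k (G : nat -> C -> C) p d M :
  derivative_chain G p d ->
  (forall z, cmod (z - p)%C < d -> cmod (G (S k) z) <= M) ->
  (forall j, (j < k)%nat -> G j p = 0%C) ->
  forall h, cmod h < d ->
  cmod (G 0%nat (line p h 1) - G k p * h ^ k * (/ INR (fact k))%R)%C <= 2 ^ S k * M * cmod h ^ S k.
Proof.
  revert G. induction k as [|k IH]; intros G Hd HM Hz h Hh.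
  - replace (G 0%nat p * h ^ 0 * (/ INR (fact 0))%R)%C with (G 0%nat (line p h 0))
      by (rewrite line_0; simpl; rewrite Rinv_1; C_ring).
    replace (2 ^ 1 * M * cmod h ^ 1) with (2 * (M * cmod h)) by ring.
    apply (Cmod_increment_le (fun u => G 0%nat (line p h u)) (fun u => G 1%nat (line p h u) * h)%C).
    + intros u Hu. apply Hd, Cmod_segment_lt; assumption.
    + intros u Hu. rewrite Cmod_mult. apply Rmult_le_compat_r; [apply Cmod_ge_0|].
      apply HM, Cmod_segment_lt; assumption.
  - set (W := (G (S k) p * h ^ S k)%C).
    replace (G 0%nat (line p h 1) - W * (/ INR (fact (S k)))%R)%C
      with ((G 0%nat (line p h 1) - W * (1 ^ S k / INR (fact (S k)))%R)
            - (G 0%nat (line p h 0) - W * (0 ^ S k / INR (fact (S k)))%R))%C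
      by (rewrite line_0, Hz, pow1, pow_i by lia; unfold W, Rdiv; rewrite Rmult_0_l, Rmult_1_l; C_ring).
    replace (2 ^ S (S k) * M * cmod h ^ S (S k)) with (2 * (2 ^ S k * M * cmod h ^ S k * cmod h))
      by (simpl; ring).
    apply (Cmod_increment_le (fun u => G 0%nat (line p h u) - W * (u ^ S k / INR (fact (S k)))%R)%C
                             (fun u => G 1%nat (line p h u) * h - W * (u ^ k / INR (fact k))%R)%C).
    + intros u Hu. apply is_cderive_plus; [apply Hd, Cmod_segment_lt; assumption|].
      apply is_cderive_opp, is_cderive_monomial.
    + (* the derivative of the remainder is [h] times the order-[k] remainder of [G 1] at [u h] *)
      intros u Hu. unfold W. rewrite remainder_scal, <- line_scal, Cmod_mult.
      apply Rmult_le_compat_r; [apply Cmod_ge_0|].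
      assert (Huh : cmod (u * h)%C <= cmod h).
      { rewrite Cmod_mult, Cmod_R, Rabs_pos_eq by lra. pose proof (Cmod_ge_0 h). nra. }
      assert (HM0 : 0 <= M).
      { apply Rle_trans with (cmod (G (S (S k)) p)); [apply Cmod_ge_0|]. apply HM.
        unfold Cminus. rewrite Cplus_opp_r, Cmod_0. pose proof (Cmod_ge_0 h). lra. }
      eapply Rle_trans.
      * apply (IH (fun j => G (S j))); [intros j; apply Hd | exact HM | |lra].
        intros j Hj. apply Hz. lia.
      * apply Rmult_le_compat_l; [apply Rmult_le_pos; [apply pow_le|]; lra|].
        apply pow_incr. split; [apply Cmod_ge_0|exact Huh].
Qed.

Lemma zero_isolated_of_derivative_neq0 k (G : nat -> C -> C) p d M :
  0 < d -> 0 < M -> derivative_chain G p d ->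
  (forall z, cmod (z - p)%C < d -> cmod (G (S k) z) <= M) ->
  (forall j, (j < k)%nat -> G j p = 0%C) -> G k p <> 0%C ->
  exists e, 0 < e /\ forall z, cmod (z - p)%C < e -> G 0%nat z = 0%C -> z = p.
Proof.
  intros Hd HM Hchain HMb Hz Hk.
  set (c := cmod (G k p)). assert (Hc : 0 < c) by (apply Cmod_gt_0, Hk).
  assert (Hf : 0 < INR (fact k)) by (apply lt_0_INR, lt_O_fact).
  set (K := INR (fact k) * 2 ^ S k * M).
  assert (HK : 0 < K) by (unfold K; pose proof (pow_lt 2 (S k)); apply Rmult_lt_0_compat; nra).
  exists (Rmin d (c / (2 * K))). split; [apply Rmin_pos; [lra|apply Rdiv_lt_0_compat; lra]|].
  intros z Hzp H0. apply NNPP. intros Hne.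
  pose proof (Rmin_l d (c / (2 * K))). pose proof (Rmin_r d (c / (2 * K))).
  set (h := (z - p)%C) in *.
  assert (Hh : 0 < cmod h).
  { apply Cmod_gt_0. intros E. apply Hne. replace z with (h + p)%C by (unfold h; C_ring).
    rewrite E. C_ring. }
  pose proof (taylor_remainder_le k G p d M Hchain HMb Hz h ltac:(lra)) as T.
  unfold h in T. rewrite line_1, H0 in T. fold h in T.
  replace (0 - G k p * h ^ k * (/ INR (fact k))%R)%C with (- (G k p * h ^ k * (/ INR (fact k))%R))%C
    in T by C_ring.
  rewrite Cmod_opp, !Cmod_mult, Cmod_pow, Cmod_R, Rabs_pos_eq in T
    by (apply Rlt_le, Rinv_0_lt_compat, Hf).
  fold c in T.
  (* [T] reads [c |h|^k / k! <= 2^(k+1) M |h|^(k+1)], i.e. [c <= K |h| < c / 2] *)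
  assert (Hhk : 0 < cmod h ^ k) by (apply pow_lt, Hh).
  assert (c <= K * cmod h).
  { apply (Rmult_le_reg_r (cmod h ^ k * / INR (fact k))).
    - apply Rmult_lt_0_compat; [exact Hhk|apply Rinv_0_lt_compat, Hf].
    - replace (K * cmod h * (cmod h ^ k * / INR (fact k))) with (2 ^ S k * M * cmod h ^ S k)
        by (unfold K; simpl; field; lra).
      lra. }
  assert (K * cmod h < K * (c / (2 * K))) by (apply Rmult_lt_compat_l; lra).
  replace (K * (c / (2 * K))) with (c / 2) in * by (field; lra). lra.
Qed.

(** * The derivatives of [Q] *)

Lemma slit_plane_nbhd p : in_slit_plane p ->
  exists d, 0 < d /\ forall z, cmod (z - p)%C < d -> in_slit_plane z /\ d <= cmod z.
Proof.
  unfold in_slit_plane, Re, Im. intros Hs.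
  destruct (Rlt_dec 0 (fst p)) as [Hx|Hx].
  - exists (fst p / 2). split; [lra|]. intros z Hz.
    pose proof (Rabs_fst_le_Cmod (z - p)%C) as H1. pose proof (Rabs_fst_le_Cmod z) as H2.
    simpl in H1. apply Rabs_le_between in H1. pose proof (Rle_abs (fst z)). lra.
  - assert (Hy : 0 < Rabs (snd p)) by (apply Rabs_pos_lt; intros Hy; apply Hs; lra).
    exists (Rabs (snd p) / 2). split; [lra|]. intros z Hz.
    pose proof (Rabs_snd_le_Cmod (z - p)%C) as H1. pose proof (Rabs_snd_le_Cmod z) as H2. simpl in H1.
    pose proof (Rabs_triang_inv (snd p) (snd z)) as H3. rewrite Rabs_minus_sym in H3.
    unfold Rminus in H3. assert (Hz2 : Rabs (snd p) / 2 < Rabs (snd z)) by lra.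
    split; [intros [Hz0 _]; rewrite Hz0, Rabs_R0 in Hz2|]; lra.
Qed.

Lemma Rpower_le_between r m M be : 0 < m -> m <= r <= M -> Rpower r be <= Rpower m be + Rpower M be.
Proof.
  intros Hm Hr. pose proof (exp_pos (be * ln m)). pose proof (exp_pos (be * ln M)).
  unfold Rpower in *. destruct (Rle_dec 0 be).
  - assert (be * ln r <= be * ln M) by (apply Rmult_le_compat_l, ln_le; lra).
    pose proof (exp_le _ _ H1). lra.
  - assert (be * ln m >= be * ln r) by (apply Rle_ge, Rmult_le_compat_neg_l, ln_le; lra).
    pose proof (exp_le (be * ln r) (be * ln m) (Rge_le _ _ H1)). lra.
Qed.

Fixpoint falling (al : R) (j : nat) : R :=
  match j with O => 1 | S j => falling al j * (al - INR j) end.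

Section Derivatives.
Variables (al a b tau : R).

Definition dQ (j : nat) (z : C) : C :=
  (falling al j * Cpow_principal z (al - INR j) + (match j with O => - a | S _ => 0 end : R)
   + (- b * (- tau) ^ j)%R * edelay tau z)%C.

Lemma dQ_0 z : dQ 0 z = Q al a b tau z.
Proof.
  unfold dQ, Q, edelay, Cadd, Cscal, RtoC, Re, Im; simpl. rewrite Rminus_0_r.
  apply injective_projections; simpl; ring.
Qed.

Lemma derivative_chain_dQ p d :
  (forall z, cmod (z - p)%C < d -> in_slit_plane z) -> derivative_chain dQ p d.
Proof.
  intros Hslit j h u Hu. unfold dQ.
  eapply is_cderive_ext; [intros; reflexivity| |].
  2:{ apply is_cderive_plus; [apply is_cderive_plus|].
      - apply is_cderive_scal, is_cderive_Cpow_principal_line, Hslit, Hu.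
      - apply is_cderive_const.
      - apply is_cderive_scal, is_cderive_edelay_line. }
  simpl falling. replace (al - INR j - 1) with (al - INR (S j)) by (rewrite S_INR; ring).
  rewrite !RtoC_mult. simpl pow. rewrite !RtoC_mult. rewrite !RtoC_opp. C_ring.
Qed.

Lemma dQ_recurrence j z : in_slit_plane z -> (0 < j)%nat ->
  (tau * dQ j z + dQ (S j) z =
   falling al j * Cpow_principal z (al - INR (S j)) * (tau * z + (al - INR j)%R))%C.
Proof.
  intros Hs Hj. destruct j as [|j]; [lia|].
  assert (Hw : Cpow_principal z (al - INR (S j)) = (Cpow_principal z (al - INR (S (S j))) * z)%C).
  { rewrite <- Cpow_principal_plus1 by exact Hs. f_equal. rewrite (S_INR (S j)). ring. }
  unfold dQ. rewrite Hw. cbn [falling]. rewrite <- (tech_pow_Rmult (- tau) (S j)).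
  rewrite !RtoC_mult, !RtoC_opp. C_ring.
Qed.

Lemma dQ_123_not_all_zero z : al <> 0 -> al <> 1 -> in_slit_plane z ->
  ~ (dQ 1 z = 0%C /\ dQ 2 z = 0%C /\ dQ 3 z = 0%C).
Proof.
  intros Hal0 Hal1 Hs [H1 [H2 H3]].
  assert (Hroot : forall j, (0 < j)%nat -> falling al j <> 0 ->
            dQ j z = 0%C -> dQ (S j) z = 0%C -> (tau * z + (al - INR j)%R)%C = 0%C).
  { intros j Hj Hf Hj0 HSj0. pose proof (dQ_recurrence j z Hs Hj) as E.
    rewrite Hj0, HSj0 in E. apply NNPP. intros Hne.
    apply (Cmult_neq_0 (falling al j * Cpow_principal z (al - INR (S j))) (tau * z + (al - INR j)%R));
      [apply Cmult_neq_0; [|apply Cpow_principal_neq0, Hs] | exact Hne | rewrite <- E; C_ring].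
    intros Hc. apply Hf. exact (f_equal fst Hc). }
  assert (E1 := Hroot 1%nat ltac:(lia) ltac:(simpl; lra) H1 H2).
  assert (E2 := Hroot 2%nat ltac:(lia) ltac:(simpl; intros Hc; apply Rmult_integral in Hc; lra) H2 H3).
  apply (f_equal fst) in E1. apply (f_equal fst) in E2. simpl in E1, E2. lra.
Qed.

Lemma dQ_bounded_near p d j : 0 < d -> (forall z, cmod (z - p)%C < d -> d <= cmod z) ->
  exists M, 0 < M /\ forall z, cmod (z - p)%C < d -> cmod (dQ j z) <= M.
Proof.
  intros Hd Hfar. set (be := al - INR j). set (rmax := cmod p + d).
  set (c0 := match j with O => - a | S _ => 0 end). set (cb := - b * (- tau) ^ j).
  pose proof (exp_pos (be * ln d)). pose proof (exp_pos (be * ln rmax)).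
  pose proof (exp_pos (Rabs tau * rmax)).
  pose proof (Rabs_pos (falling al j)). pose proof (Rabs_pos c0). pose proof (Rabs_pos cb).
  exists (Rabs (falling al j) * (Rpower d be + Rpower rmax be) + Rabs c0
          + Rabs cb * exp (Rabs tau * rmax) + 1).
  split; [unfold Rpower; nra|]. intros z Hz.
  assert (Hzr : cmod z <= rmax).
  { replace z with (p + (z - p))%C by C_ring. pose proof (Cmod_triangle p (z - p)%C). unfold rmax; lra. }
  assert (Hpow := Rpower_le_between (cmod z) d rmax be Hd (conj (Hfar z Hz) Hzr)).
  assert (Hexp : exp (- tau * fst z) <= exp (Rabs tau * rmax)).
  { apply exp_le. pose proof (Rabs_fst_le_Cmod z). pose proof (Rabs_pos tau).
    apply Rle_trans with (Rabs (- tau * fst z)); [apply Rle_abs|].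
    rewrite Rabs_mult, Rabs_Ropp. apply Rmult_le_compat_l; lra. }
  unfold dQ. fold be c0 cb.
  eapply Rle_trans; [apply Cmod_triangle|]. eapply Rle_trans; [apply Rplus_le_compat_r, Cmod_triangle|].
  rewrite !Cmod_mult, !Cmod_R, Cmod_Cpow_principal, Cmod_edelay.
  apply Rmult_le_compat_l with (r := Rabs (falling al j)) in Hpow; [|lra].
  apply Rmult_le_compat_l with (r := Rabs cb) in Hexp; [|lra]. lra.
Qed.

Lemma Q_zero_isolated p : al <> 0 -> al <> 1 -> in_slit_plane p ->
  exists e, 0 < e /\ forall z, cmod (z - p)%C < e -> Q al a b tau z = C0 -> z = p.
Proof.
  intros Hal0 Hal1 Hs.
  destruct (slit_plane_nbhd p Hs) as [d [Hd Hnbhd]].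
  destruct (dec_inh_nat_subset_has_unique_least_element (fun k => dQ k p <> 0%C)) as [k [[Hk Hleast] _]].
  { intros k. apply classic. }
  { destruct (classic (dQ 1 p = 0%C /\ dQ 2 p = 0%C /\ dQ 3 p = 0%C)) as [H|H].
    - exfalso. exact (dQ_123_not_all_zero p Hal0 Hal1 Hs H).
    - apply not_and_or in H as [H|H]; [|apply not_and_or in H as [H|H]]; eexists; exact H. }
  destruct (dQ_bounded_near p d (S k) Hd (fun z Hz => proj2 (Hnbhd z Hz))) as [M [HM HMb]].
  destruct (zero_isolated_of_derivative_neq0 k dQ p d M Hd HM) as [e [He Hiso]].
  - apply derivative_chain_dQ. intros z Hz. apply (Hnbhd z Hz).
  - exact HMb.
  - intros j Hj. apply NNPP. intros Hne. specialize (Hleast j Hne). lia.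
  - exact Hk.
  - exists e. split; [exact He|]. intros z Hz HQ. apply Hiso; [exact Hz|]. rewrite dQ_0. exact HQ.
Qed.
End Derivatives.

(** * No zeros near the cut and near the origin *)

Lemma Rabs_sin_le u : Rabs (sin u) <= Rabs u.
Proof.
  destruct (MVT_abs sin cos 0 u) as [c [Hc _]]; [intros c _; apply derivable_pt_lim_sin|].
  rewrite sin_0, !Rminus_0_r in Hc. rewrite Hc.
  pose proof (Rabs_pos u). assert (Rabs (cos c) <= 1) by (apply Rabs_le, COS_bound). nra.
Qed.

Lemma atan_le x y : x <= y -> atan x <= atan y.
Proof. intros [H|H]; [apply Rlt_le, atan_increasing, H|rewrite H; apply Rle_refl]. Qed.

Lemma Rabs_Carg_left z : fst z <= 0 -> snd z <> 0 -> PI / 2 <= Rabs (Carg z) <= PI.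
Proof.
  destruct z as [x y]; simpl. intros Hx Hy. pose proof (atan_bound (x / y)).
  destruct (Rlt_dec 0 y) as [Hy'|Hy'].
  - assert (atan (x / y) <= 0).
    { rewrite <- atan_0. apply atan_le. pose proof (Rinv_0_lt_compat y Hy'). unfold Rdiv. nra. }
    rewrite Carg_upper, Rabs_pos_eq by lra. lra.
  - assert (0 <= atan (x / y)).
    { rewrite <- atan_0. apply atan_le. pose proof (Rinv_lt_0_compat y ltac:(lra)). unfold Rdiv. nra. }
    rewrite Carg_lower, Rabs_left by lra. lra.
Qed.

(* The minimum of [sin (al * th)] over [PI/2 <= th <= PI]. *)
Definition sin_floor (al : R) := Rmin (sin (al * (PI / 2))) (sin (al * PI)).

Lemma sin_floor_pos al : 0 < al < 1 -> 0 < sin_floor al.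
Proof. intros H. pose proof PI_RGT_0. apply Rmin_glb_lt; apply sin_gt_0; nra. Qed.

Lemma sin_floor_le al th : 0 < al < 1 -> PI / 2 <= Rabs th <= PI -> sin_floor al <= Rabs (sin (al * th)).
Proof.
  intros Hal Hth. pose proof PI_RGT_0.
  assert (Hpos : sin_floor al <= sin (al * Rabs th)).
  { unfold sin_floor. destruct (Rle_dec (al * Rabs th) (PI / 2)).
    - eapply Rle_trans; [apply Rmin_l|]. apply sin_incr_1; nra.
    - eapply Rle_trans; [apply Rmin_r|]. apply sin_decr_1; nra. }
  pose proof (sin_floor_pos al Hal).
  destruct (Rle_dec 0 th).
  - rewrite Rabs_pos_eq in * by lra. rewrite Rabs_pos_eq; lra.
  - rewrite Rabs_left in * by lra. replace (al * th) with (- (al * - th)) by ring.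
    rewrite sin_neg, Rabs_Ropp, Rabs_pos_eq; lra.
Qed.

Lemma Im_Q al a b tau z : snd (Q al a b tau z) =
  Rpower (cmod z) al * sin (al * Carg z) - b * exp (- tau * fst z) * sin (- tau * snd z).
Proof.
  unfold Q, Cadd, Cpow_principal, Cscal, Cexp, RtoC, Re, Im; simpl.
  change Defs.Cmod with Complex.Cmod. ring.
Qed.

Lemma Rabs_Im_Cpow_ge al r z : 0 < al < 1 -> 0 < r -> fst z <= - r -> snd z <> 0 ->
  Rpower r al * sin_floor al <= Rabs (Rpower (cmod z) al * sin (al * Carg z)).
Proof.
  intros Hal Hr Hx Hy. rewrite Rabs_mult, (Rabs_pos_eq (Rpower _ _)) by (apply Rlt_le, exp_pos).
  apply Rmult_le_compat; [apply Rlt_le, exp_pos|apply Rlt_le, sin_floor_pos, Hal| |].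
  - apply Rle_Rpower_l; [lra|]. pose proof (Rabs_fst_le_Cmod z). rewrite Rabs_left1 in * by lra. lra.
  - apply sin_floor_le; [exact Hal|]. apply Rabs_Carg_left; [lra|exact Hy].
Qed.

Lemma Rabs_delay_term_le b tau x y :
  Rabs (b * exp (- tau * x) * sin (- tau * y)) <= Rabs b * exp (Rabs tau * Rabs x) * Rabs tau * Rabs y.
Proof.
  rewrite !Rabs_mult, (Rabs_pos_eq (exp _)) by (apply Rlt_le, exp_pos).
  assert (Hexp : exp (- tau * x) <= exp (Rabs tau * Rabs x)).
  { apply exp_le. rewrite <- Rabs_Ropp, <- Rabs_mult. apply Rle_abs. }
  pose proof (Rabs_sin_le (- tau * y)) as Hsin. rewrite Rabs_mult, Rabs_Ropp in Hsin.
  pose proof (Rabs_pos b). pose proof (Rabs_pos (sin (- tau * y))).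
  rewrite !Rmult_assoc. apply Rmult_le_compat_l; [lra|].
  apply Rmult_le_compat; [apply Rlt_le, exp_pos|lra|lra|lra].
Qed.

Lemma Q_no_zero_near_cut al a b tau p : 0 < al < 1 -> snd p = 0 -> fst p < 0 ->
  exists d, 0 < d /\ forall z, in_slit_plane z -> cmod (z - p)%C < d -> Q al a b tau z <> C0.
Proof.
  intros Hal Hy Hx. set (r0 := - fst p).
  set (A := Rpower (r0 / 2) al * sin_floor al).
  assert (HA : 0 < A) by (apply Rmult_lt_0_compat; [apply exp_pos|apply sin_floor_pos, Hal]).
  set (B := Rabs b * exp (Rabs tau * (3 * r0 / 2)) * Rabs tau).
  assert (HB : 0 <= B).
  { pose proof (Rabs_pos b). pose proof (Rabs_pos tau). pose proof (exp_pos (Rabs tau * (3 * r0 / 2))).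
    unfold B. repeat apply Rmult_le_pos; lra. }
  exists (Rmin (r0 / 2) (A / (2 * (B + 1)))).
  split; [apply Rmin_pos; [unfold r0|apply Rdiv_lt_0_compat]; lra|]. intros z Hs Hd HQ.
  pose proof (Rmin_l (r0 / 2) (A / (2 * (B + 1)))). pose proof (Rmin_r (r0 / 2) (A / (2 * (B + 1)))).
  pose proof (Rabs_fst_le_Cmod (z - p)%C) as F1. pose proof (Rabs_snd_le_Cmod (z - p)%C) as F2.
  simpl in F1, F2. rewrite Hy, Ropp_0, Rplus_0_r in F2. apply Rabs_le_between in F1.
  assert (Hyz : snd z <> 0) by (intros E; apply Hs; unfold Re, Im; unfold r0 in *; lra).
  assert (Hbig := Rabs_Im_Cpow_ge al (r0 / 2) z Hal ltac:(unfold r0; lra) ltac:(unfold r0 in *; lra) Hyz).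
  assert (Hsmall : Rabs (b * exp (- tau * fst z) * sin (- tau * snd z)) <= B * Rabs (snd z)).
  { eapply Rle_trans; [apply Rabs_delay_term_le|]. unfold B.
    pose proof (Rabs_pos b). pose proof (Rabs_pos tau). pose proof (Rabs_pos (snd z)).
    assert (exp (Rabs tau * Rabs (fst z)) <= exp (Rabs tau * (3 * r0 / 2))).
    { apply exp_le, Rmult_le_compat_l; [lra|]. apply Rabs_le. unfold r0 in *; lra. }
    apply Rmult_le_compat_r; [lra|]. apply Rmult_le_compat_r; [lra|]. apply Rmult_le_compat_l; lra. }
  assert (B * Rabs (snd z) < A / 2).
  { apply Rle_lt_trans with ((B + 1) * Rabs (snd z)); [pose proof (Rabs_pos (snd z)); nra|].
    apply Rlt_le_trans with ((B + 1) * (A / (2 * (B + 1)))); [apply Rmult_lt_compat_l; lra|].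
    right; field; lra. }
  apply (f_equal snd) in HQ. rewrite Im_Q in HQ. simpl in HQ.
  replace (Rpower (cmod z) al * sin (al * Carg z)) with (b * exp (- tau * fst z) * sin (- tau * snd z))
    in Hbig by lra.
  fold A in Hbig. lra.
Qed.

Lemma Cmod_edelay_sub1_le tau z : cmod z <= 1 ->
  cmod (edelay tau z - 1)%C <= 2 * (Rabs tau * exp (Rabs tau) * cmod z).
Proof.
  intros Hz.
  replace (edelay tau z - 1)%C with (edelay tau (line 0 z 1) - edelay tau (line 0 z 0))%C.
  2:{ replace (line 0 z 1) with z by (destruct z; unfold line; simpl; f_equal; ring).
      unfold edelay, Cexp, Cscal, line, Re, Im; simpl.
      rewrite !Rplus_0_l, !Rmult_0_l, !Rmult_0_r, exp_0, cos_0, sin_0, !Rmult_1_l. reflexivity. }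
  apply (Cmod_increment_le (fun u => edelay tau (line 0 z u))
                           (fun u => - tau * edelay tau (line 0 z u) * z)%C).
  - intros t _. apply is_cderive_edelay_line.
  - intros t Ht. rewrite !Cmod_mult, Cmod_opp, Cmod_R, Cmod_edelay.
    apply Rmult_le_compat_r; [apply Cmod_ge_0|]. apply Rmult_le_compat_l; [apply Rabs_pos|].
    apply exp_le. unfold line; simpl. rewrite Rplus_0_l.
    apply Rle_trans with (Rabs (- tau * (t * fst z))); [apply Rle_abs|].
    rewrite !Rabs_mult, Rabs_Ropp, (Rabs_pos_eq t) by lra.
    pose proof (Rabs_fst_le_Cmod z). pose proof (Rabs_pos tau). pose proof (Rabs_pos (fst z)).
    rewrite <- (Rmult_1_r (Rabs tau)) at 2. apply Rmult_le_compat_l; [lra|]. nra.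
Qed.

Lemma Rpower_lt_near0 be eps : 0 < be -> 0 < eps ->
  exists d, 0 < d /\ forall r, 0 < r < d -> Rpower r be < eps.
Proof.
  intros Hbe Heps. exists (Rpower eps (/ be)). split; [apply exp_pos|].
  intros r Hr. replace eps with (Rpower (Rpower eps (/ be)) be).
  - apply Rlt_Rpower_l; lra.
  - rewrite Rpower_mult, Rinv_l, Rpower_1 by lra. reflexivity.
Qed.

Lemma Q_zero_near0_estimate al a b tau z : in_slit_plane z -> cmod z <= 1 -> Q al a b tau z = C0 ->
  Rabs (Rpower (cmod z) al - Rabs (a + b)) <= 2 * (Rabs b * Rabs tau * exp (Rabs tau)) * cmod z.
Proof.
  intros Hs Hz HQ.
  assert (E : Cpow_principal z al = ((a + b)%R + b * (edelay tau z - 1))%C).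
  { apply injective_projections; [apply (f_equal fst) in HQ|apply (f_equal snd) in HQ];
      unfold Q, edelay, Cadd, Cscal, RtoC, C0, Re, Im in *; simpl in *; lra. }
  rewrite <- Cmod_Cpow_principal, E.
  replace (2 * (Rabs b * Rabs tau * exp (Rabs tau)) * cmod z)
    with (Rabs b * (2 * (Rabs tau * exp (Rabs tau) * cmod z))) by ring.
  eapply Rle_trans; [|apply Rmult_le_compat_l; [apply Rabs_pos|apply Cmod_edelay_sub1_le, Hz]].
  rewrite <- (Cmod_R b), <- Cmod_mult. apply Rabs_le_between. rewrite <- (Cmod_R (a + b)).
  set (w := (b * (edelay tau z - 1))%C).
  pose proof (Cmod_triangle (a + b)%R w) as H1.
  pose proof (Cmod_triangle ((a + b)%R + w) (- w))%C as H2.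
  replace ((a + b)%R + w + - w)%C with ((a + b)%R : C) in H2 by C_ring.
  rewrite Cmod_opp in H2. lra.
Qed.

Lemma linear_lt_Rpower_near0 al K : 0 < al < 1 -> 0 <= K ->
  exists d, 0 < d /\ forall r, 0 < r < d -> K * r < Rpower r al.
Proof.
  intros Hal HK.
  destruct (Rpower_lt_near0 (1 - al) (/ (K + 1))) as [d [Hd Hsmall]]; [lra|apply Rinv_0_lt_compat; lra|].
  exists d. split; [exact Hd|]. intros r Hr. specialize (Hsmall r Hr).
  assert (Hp : 0 < Rpower r (1 - al)) by apply exp_pos.
  assert (Eq : Rpower r al * Rpower r (1 - al) = r).
  { rewrite <- Rpower_plus, Rplus_minus, Rpower_1 by lra. reflexivity. }
  apply Rmult_lt_compat_l with (r := K + 1) in Hsmall; [|lra]. rewrite Rinv_r in Hsmall by lra.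
  assert (0 < Rpower r al) by apply exp_pos. nra.
Qed.

Lemma Rpower_plus_linear_lt_near0 al K c : 0 < al -> 0 <= K -> 0 < c ->
  exists d, 0 < d /\ forall r, 0 < r < d -> Rpower r al + K * r < c.
Proof.
  intros Hal HK Hc. destruct (Rpower_lt_near0 al (c / 2)) as [d [Hd Hsmall]]; [exact Hal|lra|].
  exists (Rmin d (c / (2 * (K + 1)))). split; [apply Rmin_pos; [exact Hd|apply Rdiv_lt_0_compat; lra]|].
  intros r Hr. pose proof (Rmin_l d (c / (2 * (K + 1)))). pose proof (Rmin_r d (c / (2 * (K + 1)))).
  specialize (Hsmall r ltac:(lra)).
  assert (K * r < c / 2).
  { apply Rle_lt_trans with ((K + 1) * r); [nra|].
    apply Rlt_le_trans with ((K + 1) * (c / (2 * (K + 1)))); [apply Rmult_lt_compat_l; lra|].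
    right. field. lra. }
  lra.
Qed.

Lemma Q_no_zero_near0 al a b tau : 0 < al < 1 ->
  exists d, 0 < d /\ forall z, in_slit_plane z -> cmod z < d -> Q al a b tau z <> C0.
Proof.
  intros Hal. set (K := 2 * (Rabs b * Rabs tau * exp (Rabs tau))).
  assert (HK : 0 <= K).
  { pose proof (Rabs_pos b). pose proof (Rabs_pos tau). pose proof (exp_pos (Rabs tau)).
    unfold K. repeat apply Rmult_le_pos; lra. }
  assert (Hest : forall z, in_slit_plane z -> cmod z < 1 -> Q al a b tau z = C0 ->
            Rabs (Rpower (cmod z) al - Rabs (a + b)) <= K * cmod z)
    by (intros z Hs Hz HQ; apply Q_zero_near0_estimate; [exact Hs|lra|exact HQ]).
  destruct (Req_dec (a + b) 0) as [Hab|Hab].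
  - destruct (linear_lt_Rpower_near0 al K Hal HK) as [d [Hd Hlt]].
    exists (Rmin 1 d). split; [apply Rmin_pos; lra|]. intros z Hs Hz HQ.
    pose proof (Rmin_l 1 d). pose proof (Rmin_r 1 d). pose proof (slit_plane_Cmod_pos z Hs).
    specialize (Hest z Hs ltac:(lra) HQ). rewrite Hab, Rabs_R0, Rminus_0_r in Hest.
    pose proof (Rle_abs (Rpower (cmod z) al)). specialize (Hlt (cmod z) ltac:(lra)). lra.
  - destruct (Rpower_plus_linear_lt_near0 al K (Rabs (a + b))) as [d [Hd Hlt]];
      [lra|exact HK|apply Rabs_pos_lt, Hab|].
    exists (Rmin 1 d). split; [apply Rmin_pos; lra|]. intros z Hs Hz HQ.
    pose proof (Rmin_l 1 d). pose proof (Rmin_r 1 d). pose proof (slit_plane_Cmod_pos z Hs).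
    specialize (Hest z Hs ltac:(lra) HQ). apply Rabs_le_between in Hest.
    specialize (Hlt (cmod z) ltac:(lra)). lra.
Qed.

(** * Finiteness on rectangles by bisection *)

Definition half (I : R * R) (left : bool) : R * R :=
  if left then (fst I, (fst I + snd I) / 2) else ((fst I + snd I) / 2, snd I).

Lemma halving_intervals (I : nat -> R * R) :
  fst (I 0%nat) <= snd (I 0%nat) -> (forall n, exists c, I (S n) = half (I n) c) ->
  exists x, forall n, fst (I n) <= x <= snd (I n) /\
    snd (I n) - fst (I n) = (snd (I 0%nat) - fst (I 0%nat)) * (/ 2) ^ n.
Proof.
  intros H0 Hstep. set (w := snd (I 0%nat) - fst (I 0%nat)).
  assert (Hw : forall n, snd (I n) - fst (I n) = w * (/ 2) ^ n).
  { induction n as [|n IH]; [simpl; unfold w; ring|]. simpl pow.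
    destruct (Hstep n) as [[|] Hc]; rewrite Hc; simpl;
      [replace ((fst (I n) + snd (I n)) / 2 - fst (I n)) with ((snd (I n) - fst (I n)) / 2) by field
      |replace (snd (I n) - (fst (I n) + snd (I n)) / 2) with ((snd (I n) - fst (I n)) / 2) by field];
      rewrite IH; field. }
  assert (Hle : forall n, fst (I n) <= snd (I n)).
  { intros n. pose proof (Hw n). pose proof (pow_le (/ 2) n ltac:(lra)). unfold w in *. nra. }
  assert (Hmono : forall n, fst (I n) <= fst (I (S n)) /\ snd (I (S n)) <= snd (I n)).
  { intros n. specialize (Hle n). destruct (Hstep n) as [[|] ->]; simpl; lra. }
  assert (Hlo_hi : forall m n, fst (I m) <= snd (I n)).
  { assert (Hlo : forall m k, fst (I m) <= fst (I (k + m)%nat))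
      by (intros m k; induction k; simpl; [lra|specialize (Hmono (k + m)%nat); lra]).
    assert (Hhi : forall m k, snd (I (k + m)%nat) <= snd (I m))
      by (intros m k; induction k; simpl; [lra|specialize (Hmono (k + m)%nat); lra]).
    intros m n. destruct (Nat.le_ge_cases m n) as [Hmn|Hmn].
    - specialize (Hlo m (n - m)%nat). rewrite Nat.sub_add in Hlo by exact Hmn. specialize (Hle n). lra.
    - specialize (Hhi n (m - n)%nat). rewrite Nat.sub_add in Hhi by exact Hmn. specialize (Hle m). lra. }
  assert (Hgrow : Un_growing (fun n => fst (I n))) by (intros n; apply Hmono).
  destruct (growing_cv _ Hgrow) as [x Hx].
  { exists (snd (I 0%nat)). intros y [n ->]. apply Hlo_hi. }
  exists x. intros n. split; [|apply Hw]. split; [apply (growing_ineq _ _ Hgrow Hx)|].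
  apply Rnot_lt_le. intros Hlt. destruct (Hx (x - snd (I n))) as [N HN]; [lra|].
  specialize (HN N (le_n N)). specialize (Hlo_hi N n). unfold Rdist in HN.
  rewrite Rabs_left1 in HN; lra.
Qed.

Definition in_box (B : (R * R) * (R * R)) (z : C) : Prop :=
  fst (fst B) <= fst z <= snd (fst B) /\ fst (snd B) <= snd z <= snd (snd B).

Definition finite_on (P S : C -> Prop) : Prop := exists l, forall z, P z -> S z -> In z l.

Definition quarter (B B' : (R * R) * (R * R)) : Prop :=
  exists c1 c2, B' = (half (fst B) c1, half (snd B) c2).

Lemma quarter_not_finite_on P B : ~ finite_on P (in_box B) ->
  exists B', quarter B B' /\ ~ finite_on P (in_box B').
Proof.
  intros H. apply NNPP. intros Hn. apply H.
  assert (Hall : forall c1 c2, finite_on P (in_box (half (fst B) c1, half (snd B) c2))).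
  { intros c1 c2. apply NNPP. intros Hc. apply Hn. eexists; split; [exists c1, c2; reflexivity|exact Hc]. }
  destruct (Hall true true) as [l1 H1], (Hall true false) as [l2 H2],
    (Hall false true) as [l3 H3], (Hall false false) as [l4 H4].
  exists (l1 ++ l2 ++ l3 ++ l4). intros z Hz [Hx Hy]. rewrite !in_app_iff.
  destruct B as [[x0 x1] [y0 y1]]; unfold in_box in *; simpl in *.
  destruct (Rle_dec (fst z) ((x0 + x1) / 2)), (Rle_dec (snd z) ((y0 + y1) / 2)).
  - left; apply H1; [exact Hz|]; simpl; lra.
  - right; left; apply H2; [exact Hz|]; simpl; lra.
  - right; right; left; apply H3; [exact Hz|]; simpl; lra.
  - right; right; right; apply H4; [exact Hz|]; simpl; lra.
Qed.

Lemma finite_on_box_of_locally_finite P B :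
  fst (fst B) <= snd (fst B) -> fst (snd B) <= snd (snd B) ->
  (forall p, exists d, 0 < d /\ finite_on P (fun z => cmod (z - p)%C < d)) ->
  finite_on P (in_box B).
Proof.
  intros Hx Hy Hloc. apply NNPP. intros Hn.
  set (step := fun B0 => epsilon (inhabits B0) (fun B' => quarter B0 B' /\ ~ finite_on P (in_box B'))).
  set (Bs := fun n => Nat.iter n step B).
  assert (Hinv : forall n, ~ finite_on P (in_box (Bs n))).
  { induction n as [|n IH]; [exact Hn|]. exact (proj2 (epsilon_spec _ _ (quarter_not_finite_on P _ IH))). }
  assert (Hq : forall n, quarter (Bs n) (Bs (S n)))
    by (intros n; exact (proj1 (epsilon_spec _ _ (quarter_not_finite_on P _ (Hinv n))))).
  destruct (halving_intervals (fun n => fst (Bs n))) as [X HX]; [exact Hx|..].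
  { intros n. destruct (Hq n) as [c1 [c2 Hc]]. exists c1. rewrite Hc. reflexivity. }
  destruct (halving_intervals (fun n => snd (Bs n))) as [Y HY]; [exact Hy|..].
  { intros n. destruct (Hq n) as [c1 [c2 Hc]]. exists c2. rewrite Hc. reflexivity. }
  destruct (Hloc (X, Y)) as [d [Hd [l Hl]]].
  set (w := snd (fst B) - fst (fst B) + (snd (snd B) - fst (snd B))).
  destruct (pow_lt_1_zero (/ 2) ltac:(rewrite Rabs_pos_eq; lra) (d / (w + 1))) as [N HN];
    [apply Rdiv_lt_0_compat; unfold w; lra|].
  specialize (HN N (le_n N)). rewrite Rabs_pos_eq in HN by (apply pow_le; lra).
  apply (Hinv N). exists l. intros z Hz [Zx Zy]. apply Hl; [exact Hz|].
  destruct (HX N) as [HXN HwX], (HY N) as [HYN HwY]. simpl in HXN, HwX, HYN, HwY.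
  eapply Rle_lt_trans; [apply Cmod_le_Rabs_fst_snd|]. simpl.
  assert (Rabs (fst z + - X) <= (snd (fst B) - fst (fst B)) * (/ 2) ^ N) by (apply Rabs_le; lra).
  assert (Rabs (snd z + - Y) <= (snd (snd B) - fst (snd B)) * (/ 2) ^ N) by (apply Rabs_le; lra).
  assert (w * (/ 2) ^ N < d).
  { apply Rle_lt_trans with ((w + 1) * (/ 2) ^ N); [pose proof (pow_le (/ 2) N); nra|].
    apply Rmult_lt_reg_r with (/ (w + 1)); [apply Rinv_0_lt_compat; unfold w; lra|].
    replace ((w + 1) * (/ 2) ^ N * / (w + 1)) with ((/ 2) ^ N) by (field; unfold w; lra). exact HN. }
  unfold w in *. lra.
Qed.

(** * Zeros in a vertical strip *)

Lemma Q_zero_Im_bound al a b tau rho1 z : 0 < al -> 0 <= tau -> in_slit_plane z -> rho1 <= fst z ->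
  Q al a b tau z = C0 -> Rabs (snd z) <= Rpower (Rabs a + Rabs b * exp (- tau * rho1) + 1) (/ al).
Proof.
  intros Hal Htau Hs Hx HQ. pose proof (slit_plane_Cmod_pos z Hs) as Hr.
  assert (E : Cpow_principal z al = (a + b * edelay tau z)%C).
  { apply injective_projections; [apply (f_equal fst) in HQ|apply (f_equal snd) in HQ];
      unfold Q, edelay, Cadd, Cscal, RtoC, C0, Re, Im in *; simpl in *; lra. }
  assert (Hmod : Rpower (cmod z) al <= Rabs a + Rabs b * exp (- tau * rho1)).
  { rewrite <- Cmod_Cpow_principal, E. eapply Rle_trans; [apply Cmod_triangle|].
    rewrite Cmod_mult, !Cmod_R, Cmod_edelay. apply Rplus_le_compat_l, Rmult_le_compat_l; [apply Rabs_pos|].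
    apply exp_le. nra. }
  apply Rle_trans with (cmod z); [apply Rabs_snd_le_Cmod|].
  replace (cmod z) with (Rpower (Rpower (cmod z) al) (/ al))
    by (rewrite Rpower_mult, Rinv_r, Rpower_1 by lra; reflexivity).
  apply Rle_Rpower_l; [apply Rlt_le, Rinv_0_lt_compat, Hal|]. split; [apply exp_pos|lra].
Qed.

Lemma Q_zeros_locally_finite al a b tau p : 0 < al < 1 ->
  exists d, 0 < d /\
    finite_on (fun z => in_slit_plane z /\ Q al a b tau z = C0) (fun z => cmod (z - p)%C < d).
Proof.
  intros Hal. destruct (classic (in_slit_plane p)) as [Hs|Hns].
  - destruct (Q_zero_isolated al a b tau p ltac:(lra) ltac:(lra) Hs) as [d [Hd Hiso]].
    exists d. split; [exact Hd|]. exists (p :: nil).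
    intros z [_ HQ] Hz. left. symmetry. apply Hiso; assumption.
  - unfold in_slit_plane, Re, Im in Hns. apply NNPP in Hns as [Hy Hx].
    destruct (Rlt_dec (fst p) 0) as [Hx'|Hx'].
    + destruct (Q_no_zero_near_cut al a b tau p Hal Hy Hx') as [d [Hd Hno]].
      exists d. split; [exact Hd|]. exists nil. intros z [Hs HQ] Hz. exact (Hno z Hs Hz HQ).
    + destruct (Q_no_zero_near0 al a b tau Hal) as [d [Hd Hno]].
      exists d. split; [exact Hd|]. exists nil. intros z [Hs HQ] Hz. apply (Hno z Hs); [|exact HQ].
      replace p with (0 : C) in Hz by (apply injective_projections; simpl; lra).
      replace (z - 0)%C with (z : C) in Hz by C_ring. exact Hz.
Qed.

Theorem lemma3p1 (alpha a b tau : R)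
  (Halpha : 0 < alpha < 1) (Htau : 0 < tau) :
  forall rho1 rho2 : R, rho1 <= rho2 ->
  exists l : list Cplx,
    forall s : Cplx,
      in_slit_plane s -> rho1 <= Re s <= rho2 -> Q alpha a b tau s = C0 ->
      In s l.
Proof.
  intros rho1 rho2 Hrho.
  set (Y := Rpower (Rabs a + Rabs b * exp (- tau * rho1) + 1) (/ alpha)).
  assert (HY : 0 <= Y) by apply Rlt_le, exp_pos.
  destruct (finite_on_box_of_locally_finite (fun z => in_slit_plane z /\ Q alpha a b tau z = C0)
              ((rho1, rho2), (- Y, Y))) as [l Hl]; simpl; [lra|lra| |].
  - intros p. apply Q_zeros_locally_finite, Halpha.
  - exists l. intros s Hs Hre HQ. apply Hl; [split; assumption|]. unfold in_box, Re in *; simpl.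
    pose proof (Q_zero_Im_bound alpha a b tau rho1 s ltac:(lra) ltac:(lra) Hs (proj1 Hre) HQ) as HIm.
    apply Rabs_le_between in HIm. fold Y in HIm. lra.
Qed.
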